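(* Let $K$ be a field of characteristic $0$, let $a\in K^*$ be a nonzero constant and let $P_t(x)\in K[t,x]$ be a polynomial of degree $4$ in $x$ and of even degree $d$ in $t$. Let $V\to\mathbb{P}^1\times\mathbb{P}^1$ be the associated Châtelet surface bundle (conic bundle) and $\mathrm{De}(V)\subset\mathbb{P}^1\times\mathbb{P}^1$ its degeneracy locus. Then the projective variety $V$ is smooth over $K$ if and only if $\mathrm{De}(V)$ is a smooth curve.
   Context: Let $\tilde P_{t,t'}(x,x')=x'^4t'^dP_{t/t'}(x/x')\in K[t,t',x,x']$ be the bihomogenisation of $P_t(x)$, and set $P^{\infty\infty}_t(x)=\tilde P_{t,1}(x,1)$, $P^{\infty0}_t(x')=\tilde P_{t,1}(1,x')$, $P^{0\infty}_{t'}(x)=\tilde P_{1,t'}(x,1)$, $P^{00}_{t'}(x')=\tilde P_{1,t'}(1,x')$. Cover $\mathbb{P}^1\times\mathbb{P}^1$ (coordinates $t$ or $t'=1/t$ on the first factor, $x$ or $x'=1/x$ on the second) by the four affine opens $\mathcal{U}_{\infty\infty},\mathcal{U}_{\infty0},\mathcal{U}_{0\infty},\mathcal{U}_{00}$ (complements of $\infty$ or $0$ in each factor). $V$ is obtained by gluing the hypersurfaces $Y^2-aZ^2=W_{\infty\infty}^2P^{\infty\infty}_t(x)$, $Y^2-aZ^2=W_{\infty0}^2P^{\infty0}_t(x')$, $Y^2-aZ^2=W_{0\infty}^2P^{0\infty}_{t'}(x)$, $Y^2-aZ^2=W_{00}^2P^{00}_{t'}(x')$ in $\mathcal{U}_{\bullet\bullet}\times\mathbb{P}^2$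 (coordinates $(Y:Z:W_{\bullet\bullet})$) via $t'=t^{-1}$, $x'=x^{-1}$, $W_{\infty\infty}=W_{\infty0}x'^2=W_{0\infty}t'^{d/2}=W_{00}x'^2t'^{d/2}$, $W_{\infty0}=W_{0\infty}x^2t'^{d/2}=W_{00}t'^{d/2}$, $W_{0\infty}=W_{00}x'^2$. It maps to $\mathbb{P}^1\times\mathbb{P}^1$, and composing with the first projection gives the Châtelet surface bundle $V\to\mathbb{P}^1$ with fibres $y^2-az^2=P_\theta(x)$. The degeneracy locus $\mathrm{De}(V)$ is the curve $\tilde P_{t,t'}(x,x')=0$ in $\mathbb{P}^1\times\mathbb{P}^1$. *)

From HB Require Import structures.
From mathcomp Require Import all_boot all_order all_algebra.
From mathcomp Require Import mpoly.
Set Implicit Arguments. Unset Strict Implicit. Unset Printing Implicit Defensive.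
Import GRing.Theory.
Local Open Scope ring_scope.

(* P : {poly {poly K}} encodes P_t(x) = \sum_i (P`_i)(t) x^i, i.e. the
   coefficient of t^j x^i is (P`_i)`_j.  [c i j] below is that coefficient,
   transported to L. *)

(* Bihomogenisation x'^4 t'^d P(t/t', x/x') evaluated at polynomials
   T, T', X, X' (used to obtain the four affine charts). *)
Definition bihom (L : comNzRingType) (n : nat) (c : nat -> nat -> L) (d : nat)
    (T T' X X' : {mpoly L[n]}) : {mpoly L[n]} :=
  \sum_(i < 5) \sum_(j < d.+1)
     (c i j)%:MP * T ^+ j * T' ^+ (d - j) * X ^+ i * X' ^+ (4 - i).

Definition coefPL (K : fieldType) (L : closedFieldType) (f : {rmorphism K -> L})
    (P : {poly {poly K}}) : nat -> nat -> L :=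
  fun i j => f ((P`_i)`_j).

(* Chart polynomial P^{e1 e2}: e1 = true means the chart U_{oo .} (coordinate t),
   e1 = false the chart U_{0 .} (coordinate t'); similarly e2 for x / x'.
   u is the coordinate on the first P^1 factor, w on the second. *)
Definition Pchart (K : fieldType) (L : closedFieldType) (f : {rmorphism K -> L})
    (P : {poly {poly K}}) (d n : nat) (e1 e2 : bool) (u w : {mpoly L[n]}) :
    {mpoly L[n]} :=
  bihom (coefPL f P) d (if e1 then u else 1) (if e1 then 1 else u)
                       (if e2 then w else 1) (if e2 then 1 else w).

(* Jacobian criterion: the affine hypersurface F = 0 in A^n (over the
   algebraically closed field L) is smooth iff at every L-point of it some
   partial derivative of F is nonzero. *)
Definition affine_hyp_smooth (L : closedFieldType) (n : nat) (F : {mpoly L[n]}) :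
    Prop :=
  forall v : 'I_n -> L, F.@[v] = 0 -> exists i : 'I_n, (mderiv i F).@[v] != 0.

Definition v0 : 'I_4 := inord 0.
Definition v1 : 'I_4 := inord 1.
Definition v2 : 'I_4 := inord 2.
Definition v3 : 'I_4 := inord 3.
Definition c0 : 'I_2 := inord 0.
Definition c1 : 'I_2 := inord 1.

(* The three affine charts (W = 1, Y = 1, Z = 1) of the P^2 factor above the
   chart U_{e1 e2}; variables: 0 = t or t', 1 = x or x', 2,3 = the two
   remaining affine coordinates of P^2. *)
Definition Vchart_W (K : fieldType) (L : closedFieldType) (f : {rmorphism K -> L})
    (a : K) (P : {poly {poly K}}) (d : nat) (e1 e2 : bool) : {mpoly L[4]} :=
  'X_v2 ^+ 2 - (f a)%:MP * 'X_v3 ^+ 2 - Pchart f P d e1 e2 'X_v0 'X_v1.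

Definition Vchart_Y (K : fieldType) (L : closedFieldType) (f : {rmorphism K -> L})
    (a : K) (P : {poly {poly K}}) (d : nat) (e1 e2 : bool) : {mpoly L[4]} :=
  1 - (f a)%:MP * 'X_v2 ^+ 2 - 'X_v3 ^+ 2 * Pchart f P d e1 e2 'X_v0 'X_v1.

Definition Vchart_Z (K : fieldType) (L : closedFieldType) (f : {rmorphism K -> L})
    (a : K) (P : {poly {poly K}}) (d : nat) (e1 e2 : bool) : {mpoly L[4]} :=
  'X_v2 ^+ 2 - (f a)%:MP - 'X_v3 ^+ 2 * Pchart f P d e1 e2 'X_v0 'X_v1.

(* V is smooth over K: all 12 affine charts covering V are smooth after base
   change to the algebraically closed field L. *)
Definition V_smooth (K : fieldType) (L : closedFieldType) (f : {rmorphism K -> L})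
    (a : K) (P : {poly {poly K}}) (d : nat) : Prop :=
  forall e1 e2 : bool,
    [/\ affine_hyp_smooth (Vchart_W f a P d e1 e2),
        affine_hyp_smooth (Vchart_Y f a P d e1 e2) &
        affine_hyp_smooth (Vchart_Z f a P d e1 e2)].

Definition De_smooth (K : fieldType) (L : closedFieldType) (f : {rmorphism K -> L})
    (P : {poly {poly K}}) (d : nat) : Prop :=
  forall e1 e2 : bool, affine_hyp_smooth (Pchart f P d e1 e2 'X_c0 'X_c1).

(* On the chart W = 1 of the fibre conic, V is y^2 - a z^2 = p(u), where p is
   the chart polynomial of De(V) in the base coordinates u.  Its gradient is
   (-grad p(u), 2y, -2az), which in characteristic 0 with a != 0 vanishes
   exactly when y = z = 0 and grad p(u) = 0; so the singular points of this
   chart are the points (u, 0, 0) with u a singular point of p = 0.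
   On the charts Y = 1 and Z = 1 the equation reads b + c y^2 = z^2 p(u) with
   b, c != 0.  Away from y = 0 the y-derivative 2cy is nonzero, and on y = 0
   the equation forces z^2 p(u) = b != 0, so the z-derivative -2z p(u) is
   nonzero: these charts are smooth whatever p is. *)
From HB Require Import structures.
From mathcomp Require Import all_boot all_order all_algebra.
From mathcomp Require Import mpoly.
From mathcomp Require Import ring.
Set Implicit Arguments. Unset Strict Implicit. Unset Printing Implicit Defensive.
Import GRing.Theory.
Local Open Scope ring_scope.

Lemma mderivXU (R : comNzRingType) n (i j : 'I_n) :
  mderiv i ('X_j : {mpoly R[n]}) = (j == i)%:R.
Proof.
rewrite mderivX mnm1E; case: eqP => [->|_]; last by rewrite scale0r.
have -> : (U_(i) - U_(i))%MM = 0%MM by apply/mnmP=> l; rewrite mnmBE subnn mnm0E.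
by rewrite mpolyX0 scale1r.
Qed.

Lemma mderiv_sq (R : comNzRingType) n (i k : 'I_n) :
  mderiv k ('X_i ^+ 2 : {mpoly R[n]}) = 'X_i *+ 2 * (i == k)%:R.
Proof. by rewrite expr2 mderivM mderivXU mulr2n mulrDl mulrC. Qed.

Section ChainRule.
Variables (R : comNzRingType) (n k : nat) (lq : n.-tuple {mpoly R[k]}) (i : 'I_k).

Lemma mderiv_comp p :
  mderiv i (p \mPo lq) = \sum_(j < n) (mderiv j p \mPo lq) * mderiv i (tnth lq j).
Proof.
pose chain q :=
  mderiv i (q \mPo lq) = \sum_(j < n) (mderiv j q \mPo lq) * mderiv i (tnth lq j).
have chainC c : chain c%:MP.
  by rewrite /chain comp_mpolyC mderivC big1 // => j _; rewrite mderivC comp_mpoly0 mul0r.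
have chainX j : chain 'X_j.
  rewrite /chain comp_mpolyXU -tnth_nth (bigD1 j) //= mderivXU eqxx comp_mpoly1 mul1r.
  by rewrite big1 ?addr0 // => l /negbTE nlj; rewrite mderivXU eq_sym nlj comp_mpoly0 mul0r.
have chainD q1 q2 : chain q1 -> chain q2 -> chain (q1 + q2).
  rewrite /chain !raddfD /= => -> ->; rewrite -big_split /=.
  by apply: eq_bigr => j _; rewrite !raddfD /= mulrDl.
have chainM q1 q2 : chain q1 -> chain q2 -> chain (q1 * q2).
  rewrite /chain rmorphM mderivM /= => -> ->; rewrite mulr_suml mulr_sumr -big_split /=.
  by apply: eq_bigr => j _; rewrite mderivM rmorphD !rmorphM /=; ring.
rewrite -/(chain p) [p]mpolyE.
apply: (big_ind chain) => [|q1 q2|m _]; [by rewrite -mpolyC0 | exact: chainD |].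
rewrite -mul_mpolyC mpolyXE_id; apply: (chainM _ _ (chainC _)).
apply: (big_ind chain) => [|q1 q2|j _]; [by rewrite -mpolyC1 | exact: chainM |].
by elim: (m j) => [|e IH]; rewrite ?expr0 -?mpolyC1 // exprS; exact: chainM.
Qed.
End ChainRule.

Section Rename.
Variables (R : comNzRingType) (m n : nat) (sigma : 'I_m -> 'I_n).

Definition mrename (p : {mpoly R[m]}) : {mpoly R[n]} :=
  p \mPo [tuple 'X_(sigma i) | i < m].

Lemma meval_mrename p v : (mrename p).@[v] = p.@[v \o sigma].
Proof. by rewrite comp_mpoly_meval; apply: meval_eq => i; rewrite tnth_mktuple mevalXU. Qed.

Lemma mderiv_mrename k p :
  mderiv k (mrename p) = \sum_(j | sigma j == k) mrename (mderiv j p).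
Proof.
rewrite mderiv_comp [RHS]big_mkcond; apply: eq_bigr => j _ /=.
by rewrite tnth_mktuple mderivXU; case: eqP; rewrite ?mulr1 ?mulr0.
Qed.

Lemma mderiv_mrename_var (sigma_inj : injective sigma) j p :
  mderiv (sigma j) (mrename p) = mrename (mderiv j p).
Proof. by rewrite mderiv_mrename (big_pred1 j) // => l; exact: inj_eq. Qed.

Lemma mderiv_mrename_notin k p :
  (forall j, sigma j != k) -> mderiv k (mrename p) = 0.
Proof. by move=> notin; rewrite mderiv_mrename big_pred0 // => j; exact: negbTE. Qed.
End Rename.

Lemma comp_bihom (R : comNzRingType) n k c d (T T' X X' : {mpoly R[n]})
    (lq : n.-tuple {mpoly R[k]}) :
  bihom c d T T' X X' \mPo lq =
  bihom c d (T \mPo lq) (T' \mPo lq) (X \mPo lq) (X' \mPo lq).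
Proof.
rewrite /bihom rmorph_sum; apply: eq_bigr => i _.
rewrite rmorph_sum; apply: eq_bigr => j _.
by rewrite !rmorphM !rmorphXn /= comp_mpolyC.
Qed.

Definition base_var (j : 'I_2) : 'I_4 := widen_ord (isT : (2 <= 4)%N) j.

Lemma base_var_inj : injective base_var.
Proof. by move=> i j [] /val_inj. Qed.

Lemma base_var_c0 : base_var c0 = v0.
Proof. by apply/val_inj; rewrite /= !inordK. Qed.

Lemma base_var_c1 : base_var c1 = v1.
Proof. by apply/val_inj; rewrite /= !inordK. Qed.

Lemma base_var_neq_v2 j : base_var j != v2.
Proof. by rewrite -(inj_eq val_inj) /= inordK // neq_ltn (ltn_ord j). Qed.

Lemma base_var_neq_v3 j : base_var j != v3.
Proof. by rewrite -(inj_eq val_inj) /= inordK // neq_ltn (ltn_trans (ltn_ord j)). Qed.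

Lemma v2_neq_v3 : v2 != v3.
Proof. by rewrite -(inj_eq val_inj) /= !inordK. Qed.

Lemma base_or_fibre_var (k : 'I_4) : [\/ k = v2, k = v3 | exists j, k = base_var j].
Proof.
case: k => [[|[|[|[|//]]]] lt_k4].
- by apply: Or33; exists c0; apply/val_inj; rewrite /= inordK.
- by apply: Or33; exists c1; apply/val_inj; rewrite /= inordK.
- by apply: Or31; apply/val_inj; rewrite /= inordK.
- by apply: Or32; apply/val_inj; rewrite /= inordK.
Qed.

Lemma Pchart_mrename (K : fieldType) (L : closedFieldType) (f : {rmorphism K -> L})
    (P : {poly {poly K}}) d e1 e2 :
  Pchart f P d e1 e2 'X_v0 'X_v1 = mrename base_var (Pchart f P d e1 e2 'X_c0 'X_c1).
Proof.
rewrite /mrename /Pchart comp_bihom -base_var_c0 -base_var_c1.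
by case: e1; case: e2; rewrite ?comp_mpolyXU ?comp_mpoly1 -?tnth_nth ?tnth_mktuple.
Qed.

Section ConicCharts.
Variables (L : closedFieldType) (p : {mpoly L[2]}).
Hypothesis two_neq0 : 2%:R != 0 :> L.
Local Notation q := (mrename base_var p).

Lemma mderiv_v2_mrename_base : mderiv v2 q = 0.
Proof. exact/mderiv_mrename_notin/base_var_neq_v2. Qed.

Lemma mderiv_v3_mrename_base : mderiv v3 q = 0.
Proof. exact/mderiv_mrename_notin/base_var_neq_v3. Qed.

Lemma conic_chart_smooth (a : L) : a != 0 ->
  affine_hyp_smooth ('X_v2 ^+ 2 - a%:MP * 'X_v3 ^+ 2 - q) <-> affine_hyp_smooth p.
Proof.
move=> a_neq0; set G := (X in affine_hyp_smooth X).
have G_eval v : G.@[v] = v v2 ^+ 2 - a * v v3 ^+ 2 - p.@[v \o base_var].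
  by rewrite !(mevalB, mevalM, rmorphXn, mevalC, mevalXU) meval_mrename.
have dG_y v : (mderiv v2 G).@[v] = v v2 *+ 2.
  rewrite !mderivB mderiv_mulC !mderiv_sq mderiv_v2_mrename_base.
  rewrite eq_sym (negbTE v2_neq_v3) eqxx.
  by rewrite !(mevalB, mevalM, mevalMn, mevalC, mevalXU, meval0) /=; ring.
have dG_z v : (mderiv v3 G).@[v] = - (a * v v3 *+ 2).
  rewrite !mderivB mderiv_mulC !mderiv_sq mderiv_v3_mrename_base.
  rewrite (negbTE v2_neq_v3) eqxx.
  by rewrite !(mevalB, mevalM, mevalMn, mevalC, mevalXU, meval0) /=; ring.
have dG_base v j : (mderiv (base_var j) G).@[v] = - (mderiv j p).@[v \o base_var].
  rewrite !mderivB mderiv_mulC !mderiv_sq mderiv_mrename_var; last exact: base_var_inj.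
  rewrite ![_ == base_var j]eq_sym (negbTE (base_var_neq_v2 j)) (negbTE (base_var_neq_v3 j)).
  by rewrite !(mevalB, mevalM, mevalMn, mevalC, mevalXU, meval0) meval_mrename /=; ring.
split=> [smoothG w pw0 | smoothp v Gv0].
  pose v (k : 'I_4) := if (k < 2)%N then w (inord k) else 0.
  have vw : v \o base_var =1 w by move=> j; rewrite /v /= ltn_ord; congr w; exact: inord_val.
  have v2_0 : v v2 = 0 by rewrite /v /= inordK.
  have v3_0 : v v3 = 0 by rewrite /v /= inordK.
  have /smoothG [k] : G.@[v] = 0.
    by rewrite G_eval v2_0 v3_0 (meval_eq _ vw) pw0; ring.
  case: (base_or_fibre_var k) => [->|->|[j ->]].
  - by rewrite dG_y v2_0 mul0rn eqxx.
  - by rewrite dG_z v3_0 mulr0 mul0rn oppr0 eqxx.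
  - by rewrite dG_base oppr_eq0 (meval_eq _ vw) => ?; exists j.
have [y0|y_neq0] := eqVneq (v v2) 0; last first.
  by exists v2; rewrite dG_y -mulr_natr mulf_neq0.
have [z0|z_neq0] := eqVneq (v v3) 0; last first.
  by exists v3; rewrite dG_z oppr_eq0 -mulr_natr !mulf_neq0.
have /smoothp [j] : p.@[v \o base_var] = 0.
  by move: Gv0; rewrite G_eval y0 z0 expr0n mulr0 subr0 sub0r => /eqP; rewrite oppr_eq0 => /eqP.
by exists (base_var j); rewrite dG_base oppr_eq0.
Qed.

Lemma conic_chart_infty_smooth (b c : L) : b != 0 -> c != 0 ->
  affine_hyp_smooth (b%:MP + c%:MP * 'X_v2 ^+ 2 - 'X_v3 ^+ 2 * q).
Proof.
move=> b_neq0 c_neq0; set G := (X in affine_hyp_smooth X).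
have G_eval v : G.@[v] = b + c * v v2 ^+ 2 - v v3 ^+ 2 * p.@[v \o base_var].
  by rewrite !(mevalB, mevalD, mevalM, rmorphXn, mevalC, mevalXU) meval_mrename.
have dG_y v : (mderiv v2 G).@[v] = c * v v2 *+ 2.
  rewrite mderivB mderivD mderivC mderiv_mulC mderiv_sq mderivM mderiv_sq.
  rewrite mderiv_v2_mrename_base eq_sym (negbTE v2_neq_v3) eqxx.
  by rewrite !(mevalB, mevalD, mevalM, mevalMn, mevalC, mevalXU, meval0) meval_mrename /=; ring.
have dG_z v : (mderiv v3 G).@[v] = - (v v3 *+ 2 * p.@[v \o base_var]).
  rewrite mderivB mderivD mderivC mderiv_mulC mderiv_sq mderivM mderiv_sq.
  rewrite mderiv_v3_mrename_base (negbTE v2_neq_v3) eqxx.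
  by rewrite !(mevalB, mevalD, mevalM, mevalMn, mevalC, mevalXU, meval0) meval_mrename /=; ring.
move=> v Gv0; have [y0|y_neq0] := eqVneq (v v2) 0; last first.
  by exists v2; rewrite dG_y -mulr_natr !mulf_neq0.
have zp_eq : v v3 ^+ 2 * p.@[v \o base_var] = b.
  by move/eqP: Gv0; rewrite G_eval y0 expr0n mulr0 addr0 subr_eq0 => /eqP.
have : v v3 ^+ 2 * p.@[v \o base_var] != 0 by rewrite zp_eq.
rewrite mulf_eq0 negb_or expf_eq0 /= => /andP[z_neq0 p_neq0].
by exists v3; rewrite dG_z oppr_eq0 -mulr_natr !mulf_neq0.
Qed.
End ConicCharts.

Unset Implicit Arguments.

Theorem lemma2p1 (K : fieldType) (L : closedFieldType) (f : {rmorphism K -> L})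
    (a : K) (P : {poly {poly K}}) (d : nat) :
  [pchar K] =i pred0 ->
  a != 0 ->
  size P = 5%N ->
  (forall i : nat, leq (size P`_i) d.+1) ->
  (exists i : nat, size P`_i = d.+1) ->
  ~~ odd d ->
  (V_smooth f a P d <-> De_smooth f P d).
Proof.
(* The degree conditions on P are what make the twelve charts glue to V; the
   Jacobian criterion is checked chart by chart and does not use them. *)
move=> char0 a_neq0 _ _ _ _.
have two_neq0 : 2%:R != 0 :> L by rewrite -(rmorph_nat f) fmorph_eq0 (pcharf0P K).1.
have fa_neq0 : f a != 0 by rewrite fmorph_eq0.
have W_smooth e1 e2 : affine_hyp_smooth (Vchart_W f a P d e1 e2) <->
                      affine_hyp_smooth (Pchart f P d e1 e2 'X_c0 'X_c1).
  by rewrite /Vchart_W Pchart_mrename; exact: conic_chart_smooth.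
split=> [smoothV e1 e2 | smoothDe e1 e2].
  by case: (smoothV e1 e2) => /W_smooth.
set q := mrename base_var (Pchart f P d e1 e2 'X_c0 'X_c1).
have -> : Vchart_Y f a P d e1 e2 = 1%:MP + (- f a)%:MP * 'X_v2 ^+ 2 - 'X_v3 ^+ 2 * q.
  by rewrite /Vchart_Y Pchart_mrename mpolyC1 rmorphN mulNr.
have -> : Vchart_Z f a P d e1 e2 = (- f a)%:MP + 1%:MP * 'X_v2 ^+ 2 - 'X_v3 ^+ 2 * q.
  by rewrite /Vchart_Z Pchart_mrename mpolyC1 rmorphN mul1r [_ + 'X_v2 ^+ 2]addrC.
split; first exact/W_smooth.
  by apply: conic_chart_infty_smooth; rewrite ?oppr_eq0 ?oner_neq0.
by apply: conic_chart_infty_smooth; rewrite ?oppr_eq0 ?oner_neq0.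
Qed.
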